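(* Run UBEV-S on a contextual-bandit MDP $\mathcal M_C$ (see context). Outside of the failure event, UBEV-S has at most $\tilde O\!\left(\frac{SAH}{\mu_{\min}}\right)$ non-good episodes, where $\mu_{\min}=\min_s\mu(s)$.
   Context: $\mathcal M_C$ is a finite-horizon episodic MDP (finite state set with $S$ states, $A$ actions, horizon $H$, mean rewards in $[0,1]$) whose transitions satisfy $p(s'\mid s,a)=\mu(s')$ for all $s,a$, for a fixed distribution $\mu$ on states with $\mu_{\min}=\min_s\mu(s)>0$. UBEV-S (failure tolerance $\delta\in(0,1]$) is an optimistic algorithm that in each episode $k$ plays a policy $\pi_k$ mapping (state, timestep) to actions; $n_k(s,a)$ is the total number of visits to $(s,a)$ (aggregated over timesteps) before episode $k$; $w_{tk}(s,a)$ is the probability, in episode $k$ under $\pi_k$, of being in state $s$ at step $t$ and taking $a$. Outside of the failure event, in particular, $n_k(s,a)\ge\frac12\sum_{i<k}\sum_{t\in[H]}w_{ti}(s,a)-H\ln\frac{9SA}{\delta}$ for all $k,s,a$. Episode $k$ is good if the failure event does not occur and $n_k(s,\pi_k(s,t))\ge\frac14\sum_{i<k}\sum_{\tau\in[H]}w_{\tau i}(s,\pi_k(s,t))$ for all states $s$ and timesteps $t$; otherwise it is non-good. $\tilde O(\cdot)$ hides constants and factors polylogarithmic in quantities polynomial in $S,A,H,K,1/\delta$. *)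

From HB Require Import structures.
From mathcomp Require Import all_boot all_order all_algebra.
From mathcomp Require Import all_classical all_reals all_analysis.
Set Implicit Arguments. Unset Strict Implicit. Unset Printing Implicit Defensive.
Import Order.TTheory GRing.Theory Num.Theory.
Local Open Scope ring_scope.

(* Finite-horizon episodic MDP with finite state type S, action type A,
   horizon H (timesteps 0 .. H-1), initial state distribution p0 and
   transition kernel P s a s'. *)

Fixpoint state_dist (R : realType) (S A : finType) (p0 : S -> R)
    (P : S -> A -> S -> R) (pi : S -> nat -> A) (t : nat) : S -> R :=
  match t with
  | 0 => p0
  | t'.+1 => fun s' => \sum_(s : S)
       state_dist p0 P pi t' s * P s (pi s t') s'
  end.

Definition occ (R : realType) (S A : finType) (p0 : S -> R)
    (P : S -> A -> S -> R) (pi : S -> nat -> A) (t : nat) (s : S) (a : A) : R :=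
  state_dist p0 P pi t s * (if pi s t == a then 1 else 0).

Definition cum_occ (R : realType) (S A : finType) (H : nat) (p0 : S -> R)
    (P : S -> A -> S -> R) (pis : nat -> S -> nat -> A) (k : nat)
    (s : S) (a : A) : R :=
  \sum_(i < k) \sum_(tau < H) occ p0 P (pis i) tau s a.

Definition good_episode (R : realType) (S A : finType) (H : nat) (p0 : S -> R)
    (P : S -> A -> S -> R) (pis : nat -> S -> nat -> A)
    (n : nat -> S -> A -> nat) (k : nat) : bool :=
  [forall s : S, forall t : 'I_H,
     (n k s (pis k s t))%:R >= 4^-1 * cum_occ H p0 P pis k s (pis k s t)].

From HB Require Import structures.
From mathcomp Require Import all_boot all_order all_algebra.
From mathcomp Require Import all_classical all_reals all_analysis.
From mathcomp Require Import unstable ring lra.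
Import Order.TTheory GRing.Theory Num.Theory.
Local Open Scope ring_scope.

(* Under i.i.d. transitions the occupancy w_t(s,a) is mu(s) [pi(s,t) = a], so
   the cumulative occupancy of (s,a) grows by at least mu_min in every episode
   that plays a in s.  Comparing the failure-event bound on n_k(s,a) with the
   inequality violated by a non-good episode shows that such an episode plays
   some pair whose cumulative occupancy is still below 4 H ln(9SA/delta); a pair
   can be played below that threshold in at most 4 H ln(9SA/delta)/mu_min + 1
   episodes, and summing over the SA pairs gives the bound. *)

Lemma ln_ge_1BV (R : realType) (x : R) : 0 < x -> 1 - x^-1 <= ln x.
Proof.
move=> x_gt0; have xV_gt0 : 0 < x^-1 by rewrite invr_gt0.
have := @le_ln1Dx R (x^-1 - 1); rewrite (addrC 1) subrK lnV ?posrE //.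
by move=> /(_ ltac:(lra)); lra.
Qed.

Lemma card_steps_below_le (R : realDomainType) (f : nat -> R) (P : pred nat)
    (M m : R) (K : nat) :
  0 <= f 0 -> 0 <= M + m -> (forall k, f k <= f k.+1) ->
  (forall k, P k -> f k < M /\ f k + m <= f k.+1) ->
  #|[set k : 'I_K | P k]|%:R * m <= M + m.
Proof.
move=> f0_ge0 Mm_ge0 f_nondecr P_step.
rewrite mulr_natl -sumr_const (eq_bigl (fun k : 'I_K => P k)) => [|k]; last by rewrite inE.
suff [] : \sum_(k < K | P k) m <= f K /\ \sum_(k < K | P k) m <= M + m by [].
elim: K => [|K [le_f le_Mm]]; first by rewrite big_ord0.
rewrite big_mkcond big_ord_recr -big_mkcond /=.
have := f_nondecr K; case: ifP => [/P_step [] | _]; lra.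
Qed.

Lemma not_good_played_below {R : realType} {S A : finType} {H : nat}
    {p0 : S -> R} {P : S -> A -> S -> R} {pis : nat -> S -> nat -> A}
    {n : nat -> S -> A -> nat} {L : R} {k : nat} :
  (forall s a, 2^-1 * cum_occ H p0 P pis k s a - H%:R * L <= (n k s a)%:R) ->
  ~~ good_episode H p0 P pis n k ->
  exists s a, (cum_occ H p0 P pis k s a < 4 * H%:R * L)
              && [exists t : 'I_H, pis k s t == a].
Proof.
move=> n_ge; rewrite negb_forall => /existsP[s]; rewrite negb_forall.
move=> /existsP[t]; rewrite -ltNge => n_lt; exists s, (pis k s t).
apply/andP; split; last by apply/existsP; exists t.
by have := n_ge s (pis k s t); lra.
Qed.

Section ContextualBandit.
Context {R : realType} {S A : finType} {H : nat} {mu p0 : S -> R}.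
Context {P : S -> A -> S -> R}.
Hypotheses (mu_ge0 : forall s, 0 <= mu s) (mu_sum1 : \sum_(s : S) mu s = 1).
Hypotheses (P_mu : forall s a s', P s a s' = mu s') (p0_mu : forall s, p0 s = mu s).

Lemma mu_le1 s : mu s <= 1.
Proof. by rewrite -mu_sum1 (bigD1 s) //= lerDl sumr_ge0. Qed.

Lemma state_dist_mu pi t s : state_dist p0 P pi t s = mu s.
Proof.
elim: t s => [|t IH] s /=; first exact: p0_mu.
under eq_bigr => s' _ do rewrite IH P_mu.
by rewrite -mulr_suml mu_sum1 mul1r.
Qed.

Lemma cum_occS pis k s a :
  cum_occ H p0 P pis k.+1 s a
  = cum_occ H p0 P pis k s a + mu s *+ #|[set t : 'I_H | pis k s t == a]|.
Proof.
rewrite /cum_occ big_ord_recr /= -sumr_const; congr (_ + _).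
rewrite [RHS]big_mkcond; apply: eq_bigr => t _.
by rewrite /occ state_dist_mu inE; case: ifP; rewrite ?mulr1 ?mulr0.
Qed.

Lemma card_played_below_le pis (M mu_min : R) s a K :
  0 <= M -> 0 <= mu_min -> mu_min <= mu s ->
  #|[set k : 'I_K | (cum_occ H p0 P pis k s a < M)
                    && [exists t : 'I_H, pis k s t == a]]|%:R * mu_min
    <= M + mu_min.
Proof.
move=> M_ge0 mu_min_ge0 mu_min_le.
pose played_below k := (cum_occ H p0 P pis k s a < M)
                       && [exists t : 'I_H, pis k s t == a].
apply: (@card_steps_below_le _ (fun k => cum_occ H p0 P pis k s a) played_below).
- by rewrite /cum_occ big_ord0.
- by rewrite addr_ge0.
- by move=> k; rewrite cum_occS lerDl mulrn_wge0.
move=> k /andP[-> /existsP[t played]]; split => //.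
rewrite cum_occS lerD2l (le_trans mu_min_le) // -[leLHS]mulr1n.
by rewrite ler_wpMn2l // card_gt0; apply/set0Pn; exists t; rewrite inE.
Qed.

Lemma card_not_good_le pis n (L mu_min : R) K :
  0 <= L -> 0 <= mu_min -> (forall s, mu_min <= mu s) ->
  (forall k s a, 2^-1 * cum_occ H p0 P pis k s a - H%:R * L <= (n k s a)%:R) ->
  #|[set k : 'I_K | ~~ good_episode H p0 P pis n k]|%:R * mu_min
    <= #|S|%:R * #|A|%:R * (4 * H%:R * L + mu_min).
Proof.
move=> L_ge0 mu_min_ge0 mu_min_le no_failure.
pose B (sa : S * A) := [set k : 'I_K | (cum_occ H p0 P pis k sa.1 sa.2 < 4 * H%:R * L)
                                       && [exists t : 'I_H, pis k sa.1 t == sa.2]].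
have not_good_sub : [set k : 'I_K | ~~ good_episode H p0 P pis n k]
                    \subset \bigcup_(sa : S * A) B sa.
  apply/fintype.subsetP => k; rewrite inE => /(not_good_played_below (no_failure k)).
  by move=> [s [a played]]; apply/bigcupP; exists (s, a); rewrite ?inE.
have := leq_trans (subset_leq_card not_good_sub) (card_big_setU _ _ _).
rewrite -(ler_nat R) => /(ler_wpM2r mu_min_ge0) /le_trans; apply.
rewrite natr_sum mulr_suml.
have card_B sa : #|B sa|%:R * mu_min <= 4 * H%:R * L + mu_min.
  by apply: card_played_below_le; rewrite ?mulr_ge0.
apply: le_trans (ler_sum _ (fun sa _ => card_B sa)) _.
by rewrite sumr_const card_prod -[(_ + mu_min) *+ _]mulr_natl natrM.
Qed.

End ContextualBandit.

Theorem lemma11 (R : realType) :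
  exists C : R, 0 < C /\
  forall (S A : finType) (H : nat) (delta : R)
         (mu : S -> R) (mu_min : R)
         (p0 : S -> R) (P : S -> A -> S -> R)
         (pis : nat -> S -> nat -> A) (n : nat -> S -> A -> nat),
    (0 < H)%N ->
    0 < delta <= 1 ->
    (* mu is a distribution on states *)
    (forall s, 0 <= mu s) -> \sum_(s : S) mu s = 1 ->
    (* mu_min = min_s mu(s) > 0 *)
    (forall s, mu_min <= mu s) -> (exists s, mu s = mu_min) -> 0 < mu_min ->
    (* contextual-bandit MDP M_C: transitions (and initial state) drawn from mu *)
    (forall s a s', P s a s' = mu s') ->
    (forall s, p0 s = mu s) ->
    (* outside of the failure event *)
    (forall k s a,
       (n k s a)%:R >= 2^-1 * cum_occ H p0 P pis k s a
                       - H%:R * ln (9 * #|S|%:R * #|A|%:R / delta)) ->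
    forall K : nat,
      #|[set k : 'I_K | ~~ good_episode H p0 P pis n k]|%:R
        <= C * (#|S|%:R * #|A|%:R * H%:R / mu_min)
             * ln (9 * #|S|%:R * #|A|%:R / delta).
Proof.
exists 6; split => // S A H delta mu mu_min p0 P pis n H_gt0 /andP[delta_gt0 delta_le1]
  mu_ge0 mu_sum1 mu_min_le [s0 mu_s0] mu_min_gt0 P_mu p0_mu no_failure K.
set L := ln _.
have SA_ge1 : 1 <= #|S|%:R * #|A|%:R :> R.
  rewrite -natrM ler1n muln_gt0; apply/andP; split; apply/card_gt0P.
  - by exists s0.
  - by exists (pis 0%N s0 0%N).
have L_ge_half : 2^-1 <= L.
  have ge9 : 9 <= 9 * #|S|%:R * #|A|%:R / delta :> R.
    by rewrite ler_pdivlMr // -mulrA; lra.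
  have : ln 9 <= L by rewrite /L ler_ln ?posrE // (lt_le_trans _ ge9).
  have := @ln_ge_1BV R 9 ltac:(lra); lra.
have := card_not_good_le mu_ge0 mu_sum1 P_mu p0_mu pis n L mu_min K
  ltac:(lra) (ltW mu_min_gt0) mu_min_le no_failure.
rewrite -ler_pdivlMr // => /le_trans; apply.
have -> : 6 * (#|S|%:R * #|A|%:R * H%:R / mu_min) * L
          = #|S|%:R * #|A|%:R * (6 * H%:R * L) / mu_min by ring.
rewrite ler_pM2r ?invr_gt0 // ler_pM2l ?(lt_le_trans _ SA_ge1) //.
have mu_min_le1 : mu_min <= 1 by rewrite -mu_s0 (mu_le1 mu_ge0 mu_sum1).
have H_ge1 : 1 <= H%:R :> R by rewrite ler1n.
(* The constant 6: 4 H L + mu_min <= 6 H L since mu_min <= 1 <= 2 H L. *)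
nra.
Qed.
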